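(* Let $\delta>1$, $\gamma>0$, $A_s,A_u>0$, $\rho_s,\rho_u>0$, $\lambda>0$, $\overline{L}_{BR}>0$ and $L_{other}\ge 0$. For $j\in\{s,u\}$ let $j^*(L)=\left[\gamma^{-\delta}A_j^{\delta-1}L\right]^{\frac{1}{1+\delta\rho_j}}$ for $L>0$. For $BR>0$ and $FS\in[0,BR]$ put $f=FS/BR$, $L(BR,FS)=\overline{L}_{BR}+\lambda(BR-FS)+L_{other}$, and define \[ G_j(BR,FS)=\frac{d j^*}{dL}\big(L(BR,FS)\big)\cdot\lambda(1-f),\qquad j\in\{s,u\}. \] Then $G_s(BR,FS)\ge 0$ and $G_u(BR,FS)\ge 0$, and for $FS$ in the interior $(0,BR)$, \[ \frac{\partial G_s}{\partial FS}(BR,FS)<0,\qquad \frac{\partial G_u}{\partial FS}(BR,FS)<0. \]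
   Context: Model of the legal labor market with forum shopping: $s^*(L),u^*(L)$ are the equilibrium employment levels of skilled and unskilled legal workers given demand for legal services $L$ (derived from labor supply $j=(w_j/\gamma)^{1/\rho_j}$ and marginal-product wages $w_j=A_j^{\frac{\delta-1}{\delta}}(L/j)^{1/\delta}$ of a CES firm with elasticity $\delta$). $BR$ measures local bankruptcies and $FS$ the part forum shopped (filed in a non-local court); $f=FS/BR$ is the forum-shopped share. The bankruptcy shock has magnitude $h(BR,f)=\lambda(1-f)BR=\lambda(BR-FS)$, and demand is $L=\overline{L}_{BR}+h+L_{other}$, where $\overline{L}_{BR}$ is the steady-state quantity of bankruptcy legal services and $L_{other}$ other legal services. The paper defines the effect of bankruptcies on employment as $\frac{\partial j}{\partial BR}=\frac{\partial j}{\partial L}\cdot\frac{\partial L}{\partial BR}$ with $\frac{\partial L}{\partial BR}=\lambda(1-f)$ (i.e. holding $f$ fixed); $G_j$ is this quantity, and the claim is that it is nonnegative and decreasing in forum shopping. *)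

From Stdlib Require Import Reals.
From Coquelicot Require Import Coquelicot.
Open Scope R_scope.

Definition jstar (delta gamma A rho L : R) : R :=
  Rpower (Rpower gamma (- delta) * Rpower A (delta - 1) * L) (1 / (1 + delta * rho)).

Definition Ldem (LbarBR lambda Lother BR FS : R) : R :=
  LbarBR + lambda * (BR - FS) + Lother.

Definition Gj (delta gamma A rho lambda LbarBR Lother BR FS : R) : R :=
  Derive (jstar delta gamma A rho) (Ldem LbarBR lambda Lother BR FS)
  * (lambda * (1 - FS / BR)).

(* Write [j*(L) = (K L)^e] with [K > 0] and [e = 1/(1 + delta rho)].  Then
   [dj*/dL = e j*(L) / L], so [G_j = e lambda j*(L) (BR - FS) / (BR L)] with
   [L = c + lambda (BR - FS)], [c = Lbar_BR + L_other > 0].  This is visibly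
   nonnegative, and differentiating in [FS] gives
   [- e lambda j*(L) (e lambda (BR - FS) + c) / (BR L^2) < 0]. *)

From Stdlib Require Import Reals Lra.
From Coquelicot Require Import Coquelicot.
Open Scope R_scope.

Lemma is_derive_Rpower_scaled (K e L : R) :
  0 < K -> 0 < L ->
  is_derive (fun y => Rpower (K * y) e) L (e * Rpower (K * L) e / L).
Proof.
  intros HK HL; unfold Rpower.
  auto_derive; [nra |].
  field; split; apply Rgt_not_eq; nra.
Qed.

(* [Rpower x y] is [exp (y * ln x)], so this holds even for junk arguments [x <= 0]. *)
Lemma jstar_pos (delta gamma A rho L : R) : 0 < jstar delta gamma A rho L.
Proof. exact (exp_pos _). Qed.

Lemma is_derive_jstar (delta gamma A rho L : R) :
  0 < L ->
  is_derive (jstar delta gamma A rho) L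
    (1 / (1 + delta * rho) * jstar delta gamma A rho L / L).
Proof.
  intros HL; apply is_derive_Rpower_scaled; [| exact HL].
  apply Rmult_lt_0_compat; apply exp_pos.
Qed.

Section Sector.

Variables delta gamma A rho lambda LbarBR Lother BR : R.
Hypothesis Hexponent : 0 < 1 + delta * rho.
Hypothesis Hlambda : 0 < lambda.
Hypothesis HLbar : 0 < LbarBR.
Hypothesis HLother : 0 <= Lother.
Hypothesis HBR : 0 < BR.

Let e := 1 / (1 + delta * rho).
Let j := jstar delta gamma A rho.
Let L := Ldem LbarBR lambda Lother BR.
Let G := Gj delta gamma A rho lambda LbarBR Lother BR.

Lemma jstar_exponent_pos : 0 < e.
Proof. apply Rdiv_lt_0_compat; lra. Qed.

Lemma Ldem_pos (x : R) : x <= BR -> 0 < L x.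
Proof. intros Hx; unfold L, Ldem; nra. Qed.

Lemma Gj_eq (x : R) : x <= BR -> G x = e * j (L x) / L x * (lambda * (1 - x / BR)).
Proof.
  intros Hx; unfold G, Gj; fold (L x) j.
  erewrite (is_derive_unique j (L x)); [reflexivity |].
  apply is_derive_jstar, Ldem_pos, Hx.
Qed.

Lemma Gj_nonneg (x : R) : x <= BR -> 0 <= G x.
Proof.
  intros Hx; rewrite (Gj_eq x Hx).
  pose proof jstar_exponent_pos as He.
  pose proof (jstar_pos delta gamma A rho (L x)) as Hj.
  pose proof (Ldem_pos x Hx) as HL.
  apply Rmult_le_pos.
  - apply Rlt_le, Rdiv_lt_0_compat; [apply Rmult_lt_0_compat |]; assumption.
  - apply Rmult_le_pos; [lra |].
    pose proof (proj1 (Rdiv_le_1 x BR HBR) Hx); lra.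
Qed.

Lemma is_derive_Gj (x : R) :
  x < BR ->
  is_derive G x
    (- (e * lambda * j (L x) / (BR * L x ^ 2)) * (e * lambda * (BR - x) + (LbarBR + Lother))).
Proof.
  intros Hx.
  pose proof (Ldem_pos x (Rlt_le _ _ Hx)) as HL.
  (* [G] agrees with its closed form on the ball of radius [BR - x], which lies left of [BR]. *)
  apply is_derive_ext_loc with (fun y => e * j (L y) / L y * (lambda * (1 - y / BR))).
  - exists (mkposreal _ (proj2 (Rlt_0_minus _ _) Hx)); intros y Hy.
    change (Rabs (y - x) < BR - x) in Hy; apply Rabs_def2 in Hy.
    symmetry; apply Gj_eq; lra.
  - pose proof (is_derive_jstar delta gamma A rho _ HL) as Hj; fold e j in Hj.
    unfold L, Ldem in *.
    auto_derive.
    + repeat split; [eexists; exact Hj | apply Rgt_not_eq; exact HL].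
    + erewrite (is_derive_unique (fun y => j y)) by exact Hj.
      change (BR + - x) with (BR - x).
      field; split; apply Rgt_not_eq; lra.
Qed.

Lemma Gj_derivative_neg (x : R) :
  x < BR -> exists d, is_derive G x d /\ d < 0.
Proof.
  intros Hx; eexists; split; [exact (is_derive_Gj x Hx) |].
  pose proof jstar_exponent_pos as He.
  pose proof (jstar_pos delta gamma A rho (L x)) as Hj.
  pose proof (Ldem_pos x (Rlt_le _ _ Hx)) as HL.
  assert (Hslope : 0 < e * lambda * (BR - x) + (LbarBR + Lother)).
  { assert (0 <= e * lambda * (BR - x)) by
      (apply Rmult_le_pos; [apply Rmult_le_pos |]; lra).
    lra. }
  assert (Hcoef : 0 < e * lambda * j (L x) / (BR * L x ^ 2)).
  { apply Rdiv_lt_0_compat; [| apply Rmult_lt_0_compat; [| apply pow_lt]];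
      [apply Rmult_lt_0_compat; [apply Rmult_lt_0_compat |] | |]; assumption. }
  nra.
Qed.

End Sector.

Theorem proposition3
  (delta gamma As Au rhos rhou lambda LbarBR Lother : R)
  (Hdelta : 1 < delta) (Hgamma : 0 < gamma) (HAs : 0 < As) (HAu : 0 < Au)
  (Hrhos : 0 < rhos) (Hrhou : 0 < rhou) (Hlambda : 0 < lambda)
  (HLbar : 0 < LbarBR) (HLother : 0 <= Lother) :
  forall BR FS : R, 0 < BR -> 0 <= FS <= BR ->
    (0 <= Gj delta gamma As rhos lambda LbarBR Lother BR FS /\
     0 <= Gj delta gamma Au rhou lambda LbarBR Lother BR FS) /\
    (0 < FS < BR ->
       (exists d, is_derive (fun x => Gj delta gamma As rhos lambda LbarBR Lother BR x) FS d
                  /\ d < 0) /\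
       (exists d, is_derive (fun x => Gj delta gamma Au rhou lambda LbarBR Lother BR x) FS d
                  /\ d < 0)).
Proof.
  intros BR FS HBR [_ HFS].
  assert (Hs : 0 < 1 + delta * rhos) by nra.
  assert (Hu : 0 < 1 + delta * rhou) by nra.
  split; [split | intros [_ HFS']; split];
    [apply Gj_nonneg | apply Gj_nonneg | apply Gj_derivative_neg | apply Gj_derivative_neg];
    assumption.
Qed.
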